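(* Let $\alpha$ be a partial order on a set $A$ which is a half-space, and let $\lambda$ be a linear order on $A$. Put $\alpha[\lambda]=\alpha\cup(\lambda\setminus(\alpha\cup\alpha^{-1}))$. Then $\alpha[\lambda]$ is a linear order on $A$ containing $\alpha$, and $\alpha=\alpha[\lambda]\cap\alpha[\lambda^{-1}]$.
   Context: A quasiorder on $A$ is a reflexive and transitive relation; $\Delta_A=\{(a,a)\mid a\in A\}$. A quasiorder $\alpha$ on $A$ is a half-space if there is a quasiorder $\beta$ on $A$ with $\alpha\cup\beta=A\times A$ and $\alpha\cap\beta=\Delta_A$. Linear orders are taken reflexive (antisymmetric, transitive, total). *)

Definition relation (A : Type) := A -> A -> Prop.

Definition reflexive {A} (r : relation A) := forall a, r a a.
Definition transitive {A} (r : relation A) := forall a b c, r a b -> r b c -> r a c.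
Definition antisymmetric {A} (r : relation A) := forall a b, r a b -> r b a -> a = b.
Definition total {A} (r : relation A) := forall a b, r a b \/ r b a.

Definition quasiorder {A} (r : relation A) := reflexive r /\ transitive r.
Definition partial_order {A} (r : relation A) := quasiorder r /\ antisymmetric r.
Definition linear_order {A} (r : relation A) := partial_order r /\ total r.

Definition rel_inv {A} (r : relation A) : relation A := fun a b => r b a.
Definition rel_union {A} (r s : relation A) : relation A := fun a b => r a b \/ s a b.
Definition rel_inter {A} (r s : relation A) : relation A := fun a b => r a b /\ s a b.
Definition rel_diff {A} (r s : relation A) : relation A := fun a b => r a b /\ ~ s a b.
Definition rel_sub {A} (r s : relation A) := forall a b, r a b -> s a b.
Definition rel_eq {A} (r s : relation A) := forall a b, r a b <-> s a b.
Definition full_rel {A} : relation A := fun _ _ => True.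
Definition diag {A} : relation A := fun a b => a = b.

Definition half_space {A} (alpha : relation A) :=
  quasiorder alpha /\
  exists beta : relation A, quasiorder beta /\
    rel_eq (rel_union alpha beta) full_rel /\ rel_eq (rel_inter alpha beta) diag.

Definition extend {A} (alpha lambda : relation A) : relation A :=
  rel_union alpha (rel_diff lambda (rel_union alpha (rel_inv alpha))).

(* A partial order alpha that is a half-space has a complementary quasiorder
   beta = (A x A \ alpha) ∪ Δ, and transitivity of beta says that
   incomparability cannot jump over an alpha-edge: if x <= y in alpha and y is
   incomparable to z, then x = y or x is comparable to z (and dually).  This is
   exactly what makes alpha[lambda] transitive, since an alpha-edge followed by
   a lambda-edge between incomparable elements can then be routed through
   either alpha or lambda.  Totality and antisymmetry of alpha[lambda] are
   inherited from lambda, and an edge lying in both alpha[lambda] and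
   alpha[lambda^-1] cannot come from lambda, as lambda is antisymmetric. *)

From Stdlib Require Import Classical.

Definition comparable {A} (r : relation A) (x y : A) := r x y \/ r y x.

Section HalfSpace.

Variables (A : Type) (alpha : relation A).
Hypothesis alpha_po : partial_order alpha.
Hypothesis alpha_hs : half_space alpha.

Lemma half_space_compl_trans x y z :
  ~ alpha x y -> ~ alpha y z -> alpha x z -> x = z.
Proof.
  destruct alpha_hs as [_ [beta [[_ Bt] [Hu Hi]]]].
  unfold rel_eq, rel_union, rel_inter, full_rel, diag in Hu, Hi.
  assert (beta_compl : forall a b, ~ alpha a b -> beta a b).
  { intros a b Hab; destruct (proj2 (Hu a b) I); tauto. }
  intros Hxy Hyz Hxz.
  apply (proj1 (Hi x z)); split; [assumption|].
  apply Bt with y; apply beta_compl; assumption.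
Qed.

Lemma incomparable_after_le x y z :
  alpha x y -> ~ comparable alpha y z -> x = y \/ comparable alpha x z.
Proof.
  intros Hxy Hyz.
  destruct (classic (comparable alpha x z)) as [Hxz|Hxz]; [right; assumption|].
  left; apply (half_space_compl_trans x z y); unfold comparable in *; tauto.
Qed.

Lemma incomparable_before_le x y z :
  ~ comparable alpha x y -> alpha y z -> y = z \/ comparable alpha x z.
Proof.
  intros Hxy Hyz.
  destruct (classic (comparable alpha x z)) as [Hxz|Hxz]; [right; assumption|].
  left; apply (half_space_compl_trans y x z); unfold comparable in *; tauto.
Qed.

Variable l : relation A.
Hypothesis l_linear : linear_order l.

Lemma extend_refl : reflexive (extend alpha l).
Proof. intro a; left; apply alpha_po. Qed.

Lemma extend_antisym : antisymmetric (extend alpha l).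
Proof.
  destruct alpha_po as [_ Aa]; destruct l_linear as [[_ la] _].
  intros x y [Hxy|[Hxy Ixy]] [Hyx|[Hyx Iyx]].
  - apply Aa; assumption.
  - exfalso; apply Iyx; right; assumption.
  - exfalso; apply Ixy; right; assumption.
  - apply la; assumption.
Qed.

Lemma extend_total : total (extend alpha l).
Proof.
  destruct l_linear as [_ ltot]; intros x y.
  destruct (classic (alpha x y)) as [Hxy|Hxy]; [left; left; assumption|].
  destruct (classic (alpha y x)) as [Hyx|Hyx]; [right; left; assumption|].
  destruct (ltot x y); [left|right]; right; split; try assumption;
    unfold rel_union, rel_inv; tauto.
Qed.

Lemma extend_trans : transitive (extend alpha l).
Proof.
  destruct alpha_po as [[Ar At] _]; destruct l_linear as [[[_ lt] la] _].
  intros x y z [Hxy|[Hxy Ixy]] [Hyz|[Hyz Iyz]].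
  - left; apply At with y; assumption.
  - destruct (incomparable_after_le x y z Hxy Iyz) as [<-|[Hxz|Hzx]].
    + right; split; assumption.
    + left; assumption.
    + exfalso; apply Iyz; right; apply At with x; assumption.
  - destruct (incomparable_before_le x y z Ixy Hyz) as [<-|[Hxz|Hzx]].
    + right; split; assumption.
    + left; assumption.
    + exfalso; apply Ixy; right; apply At with z; assumption.
  - destruct (classic (alpha x z)) as [Hxz|Hxz]; [left; assumption|].
    destruct (classic (alpha z x)) as [Hzx|Hzx].
    + exfalso.
      destruct (incomparable_after_le z x y Hzx Ixy) as [->|Cyz].
      * apply Ixy; left; replace y with x by (apply la; assumption); apply Ar.
      * apply Iyz; destruct Cyz; [right|left]; assumption.
    + right; split; [apply lt with y; assumption|].
      unfold rel_union, rel_inv; tauto.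
Qed.

Lemma extend_linear : linear_order (extend alpha l).
Proof.
  repeat split.
  - apply extend_refl.
  - apply extend_trans.
  - apply extend_antisym.
  - apply extend_total.
Qed.

End HalfSpace.

Lemma le_extend {A} (alpha l : relation A) : rel_sub alpha (extend alpha l).
Proof. intros a b Hab; left; assumption. Qed.

Lemma extend_inter_inv {A} (alpha l : relation A) :
  reflexive alpha -> antisymmetric l ->
  rel_eq alpha (rel_inter (extend alpha l) (extend alpha (rel_inv l))).
Proof.
  intros Ar la a b; split.
  - intro Hab; split; left; assumption.
  - intros [[Hab|[Lab _]] [Hab'|[Lba _]]]; try assumption.
    replace b with a by (apply la; assumption).
    apply Ar.
Qed.

Theorem proposition2p5 (A : Type) (alpha lambda : relation A) :
  partial_order alpha -> half_space alpha -> linear_order lambda ->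
  linear_order (extend alpha lambda) /\ rel_sub alpha (extend alpha lambda) /\
  rel_eq alpha (rel_inter (extend alpha lambda) (extend alpha (rel_inv lambda))).
Proof.
  intros Hpo Hhs Hlin.
  split; [apply extend_linear; assumption|].
  split; [apply le_extend|].
  apply extend_inter_inv.
  - apply Hpo.
  - apply Hlin.
Qed.
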